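(* Let $\dot G\in\mathcal C_1\cup\mathcal C_4\cup\mathcal C_5$ be a connected, non-complete, $5$-regular and $1$ net-regular SRSG with parameters $(n,5,a,b,c)$. Then: (1) $a<3$; (2) if $a=0$, then two vertices joined by a positive edge have no common neighbours; if $b=0$, then two vertices joined by a negative edge have no common neighbours; (3) if $a=-1$, then $b\le 0$; (4) if $a=-2$, then $b\ge -1$; (5) $a>-3$; (6) $-2\le b<3$; (7) if $\dot G$ contains a balanced triangle (product of edge signs $+1$) with two negative edges, then $b\le 0$; (8) if $b=2$ or $b=-1$, then $a\le 0$; (9) if $b=-2$, then $a\ge 1$.
   Context: A signed graph $\dot G=(G,\sigma)$ is a simple graph $G$ with $\sigma:E(G)\to\{\pm1\}$; adjacency matrix $A_{\dot G}$ has entries $\sigma(v_iv_j)$ for adjacent vertices and $0$ otherwise. Degree and connectedness refer to $G$; net-degree is $d^+(v)-d^-(v)$; $\rho$ net-regular means all net-degrees equal $\rho$. $\dot G$ on $n$ vertices is an SRSG if it is neither homogeneous (all edges of one sign) complete nor edgeless and there are $r\in\mathbb N$, $a,b,c\in\mathbb Z$ with $(A^2_{\dot G})_{ii}=r$, $(A^2_{\dot G})_{ij}=a$ for positive edges $v_iv_j$, $b$ for negative edges, $c$ for distinct non-adjacent pairs; parameters $(n,r,a,b,c)$. Classes of inhomogeneous SRSGs: $\mathcal C_1$: $a=-b$ and (complete, or non-complete with $c\ne0$); $\mathcal C_4$: $a\ne-b$, non-complete, $c=0$; $\mathcal C_5$: $a\ne-b$, non-complete, $c\neq0$, $c\neq\frac{a+b}2$.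 *)

From mathcomp Require Import all_boot all_order all_algebra.
Set Implicit Arguments. Unset Strict Implicit. Unset Printing Implicit Defensive.
Import Order.TTheory GRing.Theory Num.Theory.
Local Open Scope ring_scope.

Record signed_graph (T : finType) := SignedGraph {
  sg_edge : rel T;
  sg_pos : rel T;
  sg_sym : symmetric sg_edge;
  sg_irr : irreflexive sg_edge;
  sg_pos_sym : symmetric sg_pos
}.

Section SG.
Variables (T : finType) (G : signed_graph T).
Local Notation E := (sg_edge G).

Definition posE (x y : T) : bool := E x y && sg_pos G x y.
Definition negE (x y : T) : bool := E x y && ~~ sg_pos G x y.

Definition adjA (x y : T) : int :=
  if E x y then (if sg_pos G x y then 1 else -1) else 0.

Definition adjA2 (x y : T) : int := \sum_(z : T) adjA x z * adjA z y.

Definition degree (x : T) : nat := #|[set y | E x y]|.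
Definition pdeg (x : T) : nat := #|[set y | posE x y]|.
Definition ndeg (x : T) : nat := #|[set y | negE x y]|.
Definition netdeg (x : T) : int := (pdeg x)%:Z - (ndeg x)%:Z.

Definition regular (k : nat) : Prop := forall x, degree x = k.
Definition net_regular (rho : int) : Prop := forall x, netdeg x = rho.

Definition connected : Prop := forall x y, connect E x y.
Definition complete : Prop := forall x y, x != y -> E x y.
Definition edgeless : Prop := forall x y, ~~ E x y.
Definition homogeneous : Prop :=
  (forall x y, E x y -> sg_pos G x y) \/ (forall x y, E x y -> ~~ sg_pos G x y).
Definition inhomogeneous : Prop :=
  (exists x y, posE x y) /\ (exists x y, negE x y).

Definition SRSG (n r : nat) (a b c : int) : Prop :=
  [/\ n = #|T|,
      ~ (homogeneous /\ complete),
      ~ edgeless &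
      [/\ forall x, adjA2 x x = r%:Z,
      forall x y, posE x y -> adjA2 x y = a,
      forall x y, negE x y -> adjA2 x y = b &
      forall x y, x != y -> ~~ E x y -> adjA2 x y = c]].

Definition class_C1 (n r : nat) (a b c : int) : Prop :=
  [/\ SRSG n r a b c, inhomogeneous, a = - b &
      (complete \/ (~ complete /\ c <> 0))].
Definition class_C4 (n r : nat) (a b c : int) : Prop :=
  [/\ SRSG n r a b c, inhomogeneous, a <> - b, ~ complete & c = 0].
(* c <> (a+b)/2 is written 2c <> a+b to stay in int *)
Definition class_C5 (n r : nat) (a b c : int) : Prop :=
  [/\ SRSG n r a b c, inhomogeneous, a <> - b, ~ complete &
      c <> 0 /\ 2 * c <> a + b].

Definition no_common_nb (x y : T) : Prop := forall z, ~~ (E x z && E y z).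

Definition balanced_triangle (x y z : T) : bool :=
  [&& E x y, E y z, E z x & adjA x y * adjA y z * adjA z x == 1].

End SG.

From mathcomp Require Import all_boot all_order all_algebra.
From mathcomp Require Import zify ring.
Import Order.TTheory GRing.Theory Num.Theory.
Local Open Scope ring_scope.
Set Implicit Arguments. Unset Strict Implicit.

(* Write A for the adjacency matrix and |A| for its entrywise absolute value.
   The parameters give A^2 = c J + (r - c) I + ((a + b)/2 - c) |A| + ((a - b)/2) A,
   and net-regularity makes A commute with J; since A commutes with A^2 and
   (a + b)/2 <> c, A commutes with |A|.  Around a vertex x, whose neighbours are
   three positive and two negative ones, this commutation, the constancy of A^2 on
   the edges at x and the degree counts (3 positive, 2 negative) at each neighbour
   constrain the signed graph induced on the five neighbours; an exhaustive check
   of the 3^10 sign patterns leaves (a, b) in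
   {(-4,3), (-4,4), (0,0), (0,1), (2,-2), (2,0), (2,1)} together with the local
   facts behind items (2) and (7).  Finally a = -4 forces b = 4 and every
   neighbourhood to be a clique, so that the connected graph would be K_6. *)

(* A configuration [e] records, for i, j < 5, the sign of the edge between the
   i-th and j-th neighbours of a vertex, neighbours 0, 1, 2 being joined to it
   positively and 3, 4 negatively. *)
Definition config := nat -> nat -> int.

Definition idx : seq nat := iota 0 5.
Definition sum5 (F : nat -> int) : int := foldr (fun j s => F j + s) 0 idx.
Definition nb_sign (i : nat) : int := if (i < 3)%N then 1 else -1.

Definition config_of (e01 e02 e03 e04 e12 e13 e14 e23 e24 e34 : int) : config :=
  fun i j => match i, j with
  | 0, 1 | 1, 0 => e01 | 0, 2 | 2, 0 => e02 | 0, 3 | 3, 0 => e03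
  | 0, 4 | 4, 0 => e04 | 1, 2 | 2, 1 => e12 | 1, 3 | 3, 1 => e13
  | 1, 4 | 4, 1 => e14 | 2, 3 | 3, 2 => e23 | 2, 4 | 4, 2 => e24
  | 3, 4 | 4, 3 => e34 | _, _ => 0 end%N.

(* the entry of A^2 between the centre and its i-th neighbour *)
Definition sq_entry (e : config) (i : nat) : int := sum5 (fun j => nb_sign j * e j i).

(* For each neighbour i: at most 3 positive and 2 negative neighbours (the centre
   included), and the (centre, i) entry of A |A| = |A| A; moreover A^2 is constant
   on the positive and on the negative neighbours. *)
Definition admissible (e : config) : bool :=
  all (fun i => [&& ((i < 3)%N + count (fun j => e i j == 1%R) idx <= 3)%N,
                    ((3 <= i)%N + count (fun j => e i j == (-1)%R) idx <= 2)%N &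
                    sum5 (fun j => nb_sign j * `|e j i|) == sum5 (fun j => e j i)]) idx
  && [&& sq_entry e 0%N == sq_entry e 1%N, sq_entry e 1%N == sq_entry e 2%N
       & sq_entry e 3%N == sq_entry e 4%N].

Definition local_facts (e : config) (a b : int) : bool :=
  [&& (a, b) \in [:: (-4, 3); (-4, 4); (0, 0); (0, 1); (2, -2); (2, 0); (2, 1)],
      (a == 0) ==> all (fun i => all (fun j => e i j == 0) idx) [:: 0; 1; 2]%N,
      (b == 0) ==> all (fun i => all (fun j => e i j == 0) idx) [:: 3; 4]%N,
      (e 3%N 4%N == 1) ==> (b <= 0),
      (a == -4) ==> [&& e 0%N 1%N == -1, e 0%N 2%N == -1 & e 1%N 2%N != 0],
      (a == -4) && (e 3%N 4%N != 0) ==> (b == 4) &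
      (a == -4) && (b == 4) ==> all (fun i => all (fun j => (i == j) || (e i j != 0)) idx) idx].

Definition vals : seq int := [:: -1; 0; 1].

Lemma admissible_configs_facts :
  all (fun e01 => all (fun e02 => all (fun e03 => all (fun e04 => all (fun e12 =>
  all (fun e13 => all (fun e14 => all (fun e23 => all (fun e24 => all (fun e34 =>
    let e := config_of e01 e02 e03 e04 e12 e13 e14 e23 e24 e34 in
    admissible e ==> local_facts e (sq_entry e 0%N) (sq_entry e 3%N))
  vals) vals) vals) vals) vals) vals) vals) vals) vals) vals.
Proof. by vm_compute. Qed.

Lemma local_facts_of_admissible (e01 e02 e03 e04 e12 e13 e14 e23 e24 e34 : int) :
  e01 \in vals -> e02 \in vals -> e03 \in vals -> e04 \in vals -> e12 \in vals ->
  e13 \in vals -> e14 \in vals -> e23 \in vals -> e24 \in vals -> e34 \in vals ->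
  let e := config_of e01 e02 e03 e04 e12 e13 e14 e23 e24 e34 in
  admissible e -> local_facts e (sq_entry e 0%N) (sq_entry e 3%N).
Proof.
move=> v01 v02 v03 v04 v12 v13 v14 v23 v24 v34; apply/implyP.
move: admissible_configs_facts.
move=> /allP/(_ _ v01)/allP/(_ _ v02)/allP/(_ _ v03)/allP/(_ _ v04)/allP/(_ _ v12).
by move=> /allP/(_ _ v13)/allP/(_ _ v14)/allP/(_ _ v23)/allP/(_ _ v24)/allP/(_ _ v34).
Qed.

Lemma local_factsP (e : config) (a b : int) : local_facts e a b ->
  [/\ (a = -4 /\ (b = 3 \/ b = 4)) \/ (a = 0 /\ (b = 0 \/ b = 1)) \/
        (a = 2 /\ (b = -2 \/ b = 0 \/ b = 1)),
      a = 0 -> forall i j, (i < 3)%N -> (j < 5)%N -> e i j = 0,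
      b = 0 -> forall i j, (3 <= i < 5)%N -> (j < 5)%N -> e i j = 0,
      e 3%N 4%N = 1 -> b <= 0 &
      a = -4 -> [/\ e 0%N 1%N = -1, e 0%N 2%N = -1, e 1%N 2%N != 0,
                    e 3%N 4%N != 0 -> b = 4 &
                    b = 4 -> forall i j, (i < 5)%N -> (j < 5)%N -> i != j -> e i j != 0]].
Proof.
case/and5P=> ab a0 b0 e34 /and3P[am4 am4_e34 am4_b4].
have idx5 j : (j < 5)%N -> j \in idx by rewrite mem_iota.
split.
- move: ab; rewrite !inE !xpair_eqE.
  by do 6?case/orP=> [/andP[/eqP-> /eqP->]|]; [tauto..|move=> /andP[/eqP-> /eqP->]; tauto].
- move=> /eqP a_0 i j lti /idx5 j5; move/implyP/(_ a_0)/allP: a0.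
  by move=> /(_ i)/(_ _)/allP/(_ j j5)/eqP -> //; move: lti; case: i => [|[|[|]]].
- move=> /eqP b_0 i j /andP[gei lti] /idx5 j5; move/implyP/(_ b_0)/allP: b0.
  by move=> /(_ i)/(_ _)/allP/(_ j j5)/eqP -> //; move: gei lti; case: i => [|[|[|[|[|]]]]].
- by move=> /eqP e34_1; move/implyP: e34; apply.
- move=> /eqP a_m4; move/implyP/(_ a_m4)/and3P: am4 => [/eqP -> /eqP -> ->].
  split=> // [e34_0|/eqP b_4 i j /idx5 i5 /idx5 j5 /negbTE neq_ij].
    by apply/eqP; move/implyP: am4_e34; rewrite a_m4 e34_0; apply.
  move/implyP: am4_b4; rewrite a_m4 b_4 => /(_ isT)/allP/(_ i i5)/allP/(_ j j5).
  by rewrite neq_ij.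
Qed.

Lemma sum5E F : sum5 F = \sum_(i < 5) F i.
Proof. by rewrite /sum5 /= !big_ord_recl big_ord0 addr0. Qed.

Section SignedGraph.
Variables (T : finType) (G : signed_graph T).
Local Notation E := (sg_edge G).
Local Notation A := (adjA G).

Lemma adjA_sym x y : A x y = A y x.
Proof. by rewrite /adjA (sg_sym G x y) (sg_pos_sym G x y). Qed.

Lemma adjA_xx x : A x x = 0.
Proof. by rewrite /adjA sg_irr. Qed.

Lemma adjA_eq1 x y : (A x y == 1) = posE G x y.
Proof. by rewrite /adjA /posE; case: (E x y); case: (sg_pos G x y). Qed.

Lemma adjA_eqN1 x y : (A x y == -1) = negE G x y.
Proof. by rewrite /adjA /negE; case: (E x y); case: (sg_pos G x y). Qed.

Lemma adjA_eq0 x y : (A x y == 0) = ~~ E x y.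
Proof. by rewrite /adjA; case: (E x y); case: (sg_pos G x y). Qed.

Lemma adjA_in_vals x y : A x y \in vals.
Proof. by rewrite /adjA; case: (E x y); case: (sg_pos G x y). Qed.

Lemma posE_sym x y : posE G x y = posE G y x.
Proof. by rewrite /posE (sg_sym G x y) (sg_pos_sym G x y). Qed.

Lemma negE_sym x y : negE G x y = negE G y x.
Proof. by rewrite /negE (sg_sym G x y) (sg_pos_sym G x y). Qed.

Lemma pdeg_add_ndeg x : (pdeg G x + ndeg G x)%N = degree G x.
Proof.
rewrite /pdeg /ndeg /degree -cardsUI.
have -> : [set y | posE G x y] :&: [set y | negE G x y] = set0.
  by apply/setP => y; rewrite !inE /posE /negE; case: (E x y); case: (sg_pos G x y).
rewrite cards0 addn0; apply: eq_card => y; rewrite !inE /posE /negE.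
by case: (E x y); case: (sg_pos G x y).
Qed.

Lemma sum_adjA x : \sum_z A x z = netdeg G x.
Proof.
have card_sum (P : pred T) : #|[set y | P y]|%:Z = \sum_z (P z)%:R.
  rewrite -sum1_card -natz natr_sum big_mkcond /=; apply: eq_bigr => z _.
  by rewrite inE; case: (P z).
rewrite /netdeg /pdeg /ndeg !card_sum -sumrB; apply: eq_bigr => z _.
by rewrite /adjA /posE /negE; case: (E x z); case: (sg_pos G x z).
Qed.

End SignedGraph.

Section NeighbourhoodCliques.
Variables (T : finType) (G : signed_graph T) (k : nat).
Local Notation E := (sg_edge G).
Hypothesis reg : regular G k.

Definition closed_nbhd (x : T) : {set T} := x |: [set y | E x y].

Lemma card_closed_nbhd x : #|closed_nbhd x| = k.+1.
Proof. by rewrite cardsU1 inE sg_irr -/(degree G x) reg. Qed.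

Hypothesis nbhd_clique : forall x y z, E x y -> E x z -> y != z -> E y z.

Lemma closed_nbhd_edge x y : E x y -> closed_nbhd x = closed_nbhd y.
Proof.
move=> Exy; apply/eqP; rewrite eqEcard !card_closed_nbhd leqnn andbT.
apply/subsetP => z; rewrite !inE => /predU1P[->|Exz]; first by rewrite sg_sym Exy orbT.
by have [//|neq_yz] := eqVneq z y; rewrite (nbhd_clique Exy Exz) ?orbT // eq_sym.
Qed.

Lemma closed_nbhd_connect x y : connect E x y -> closed_nbhd x = closed_nbhd y.
Proof.
case/connectP => p; elim: p x => [|z p IH] x /= => [_ -> //|/andP[Exz pz] y_last].
by rewrite (closed_nbhd_edge Exz); apply: IH.
Qed.

Lemma complete_of_nbhd_cliques : connected G -> complete G.
Proof.
move=> conn x y neq_xy; have := setU11 y [set z | E y z].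
by rewrite -/(closed_nbhd y) -(closed_nbhd_connect (conn x y)) !inE eq_sym (negbTE neq_xy).
Qed.

End NeighbourhoodCliques.

Section AdjacencyCommutation.
Variables (T : finType) (G : signed_graph T) (r : nat) (rho a b c : int).
Local Notation E := (sg_edge G).
Local Notation A := (adjA G).
Hypotheses (adjA2_diag : forall x, adjA2 G x x = r%:Z)
  (adjA2_pos : forall x y, posE G x y -> adjA2 G x y = a)
  (adjA2_neg : forall x y, negE G x y -> adjA2 G x y = b)
  (adjA2_nonadj : forall x y, x != y -> ~~ E x y -> adjA2 G x y = c).

Lemma adjA2_decomp x y :
  2 * adjA2 G x y =
    2 * c + 2 * (r%:Z - c) * (x == y)%:R + (a + b - 2 * c) * `|A x y| + (a - b) * A x y.
Proof.
have [<-|neq_xy] := eqVneq x y; first by rewrite adjA2_diag adjA_xx normr0 /=; ring.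
rewrite mulr0 addr0 /adjA.
case Exy: (E x y); last by rewrite adjA2_nonadj ?Exy // normr0; ring.
case Pxy: (sg_pos G x y).
  by rewrite adjA2_pos ?/posE ?Exy ?Pxy // normr1; ring.
by rewrite adjA2_neg ?/negE ?Exy ?Pxy // normrN1; ring.
Qed.

Lemma sum_mul_eq (F : T -> int) y : \sum_z F z * (z == y)%:R = F y.
Proof.
rewrite (bigD1 y) //= eqxx mulr1 big1 ?addr0 // => z /negbTE ->.
by rewrite mulr0.
Qed.

Lemma sum_adjA_adjA2 x y : \sum_z A x z * adjA2 G z y = \sum_z adjA2 G x z * A z y.
Proof.
rewrite /adjA2; under eq_bigr do rewrite big_distrr.
under [RHS]eq_bigr do rewrite big_distrl.
by rewrite [RHS]exchange_big; apply: eq_bigr => z _; apply: eq_bigr => w _; exact: mulrA.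
Qed.

Hypotheses (net : net_regular G rho) (abc : a + b != 2 * c).

Lemma adjA_normA_comm x y : \sum_z A x z * `|A z y| = \sum_z `|A x z| * A z y.
Proof.
set L := \sum_z A x z * `|A z y|; set R := \sum_z `|A x z| * A z y.
set S := \sum_z A x z * A z y.
have expand_l : 2 * \sum_z A x z * adjA2 G z y =
    2 * c * rho + 2 * (r%:Z - c) * A x y + (a + b - 2 * c) * L + (a - b) * S.
  rewrite mulr_sumr; transitivity (\sum_z (2 * c * A x z
      + 2 * (r%:Z - c) * (A x z * (z == y)%:R) + (a + b - 2 * c) * (A x z * `|A z y|)
      + (a - b) * (A x z * A z y))).
    by apply: eq_bigr => z _; rewrite mulrCA adjA2_decomp; ring.
  by rewrite !big_split /= -!mulr_sumr sum_adjA net sum_mul_eq.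
have expand_r : 2 * \sum_z adjA2 G x z * A z y =
    2 * c * rho + 2 * (r%:Z - c) * A x y + (a + b - 2 * c) * R + (a - b) * S.
  rewrite mulr_sumr; transitivity (\sum_z (2 * c * A y z
      + 2 * (r%:Z - c) * (A y z * (z == x)%:R) + (a + b - 2 * c) * (`|A x z| * A z y)
      + (a - b) * (A x z * A z y))).
    by apply: eq_bigr => z _; rewrite mulrA adjA2_decomp (adjA_sym G y z) (eq_sym z x); ring.
  by rewrite !big_split /= -!mulr_sumr sum_adjA net sum_mul_eq adjA_sym.
have : (a + b - 2 * c) * (L - R) = 0.
  have -> : (a + b - 2 * c) * (L - R) =
      2 * \sum_z A x z * adjA2 G z y - 2 * \sum_z adjA2 G x z * A z y.
    by rewrite expand_l expand_r; ring.
  by rewrite sum_adjA_adjA2 subrr.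
by move/eqP; rewrite mulf_eq0 subr_eq0 (negbTE abc) /= subr_eq0 => /eqP.
Qed.

End AdjacencyCommutation.

Section Neighbours.
Variables (T : finType) (G : signed_graph T).
Local Notation E := (sg_edge G).
Local Notation A := (adjA G).

Definition nbrs (x : T) : seq T := enum [set y | posE G x y] ++ enum [set y | negE G x y].

(* positive neighbours first; junk value x for i >= degree x *)
Definition nbr (x : T) (i : nat) : T := nth x (nbrs x) i.

Lemma mem_nbrs x z : (z \in nbrs x) = E x z.
Proof.
rewrite mem_cat !mem_enum !inE /posE /negE.
by case: (E x z); case: (sg_pos G x z).
Qed.

Lemma uniq_nbrs x : uniq (nbrs x).
Proof.
rewrite cat_uniq !enum_uniq /= andbT; apply/hasPn => z.
by rewrite !mem_enum !inE /posE /negE => /andP[_ /negbTE ->]; rewrite andbF.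
Qed.

Lemma size_nbrs x : size (nbrs x) = degree G x.
Proof. by rewrite size_cat -!cardE pdeg_add_ndeg. Qed.

Lemma edge_nbr x i : (i < degree G x)%N -> E x (nbr x i).
Proof. by move=> lti; rewrite -mem_nbrs mem_nth ?size_nbrs. Qed.

Lemma adjA_nbr x i :
  (i < degree G x)%N -> A x (nbr x i) = if (i < pdeg G x)%N then 1 else -1.
Proof.
rewrite -size_nbrs /nbr /nbrs nth_cat size_cat -!cardE -/(pdeg G x) -/(ndeg G x) => lti.
case: ifPn => ltip.
  have : nth x (enum [set y | posE G x y]) i \in enum [set y | posE G x y].
    by rewrite mem_nth // -cardE.
  by rewrite mem_enum inE /posE /adjA => /andP[-> ->].
have : nth x (enum [set y | negE G x y]) (i - pdeg G x) \in enum [set y | negE G x y].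
  by rewrite mem_nth // -cardE -/(ndeg G x); lia.
by rewrite mem_enum inE /negE /adjA => /andP[-> /negbTE ->].
Qed.

Lemma nbr_inj x i j :
  (i < degree G x)%N -> (j < degree G x)%N -> nbr x i = nbr x j -> i = j.
Proof.
by rewrite -size_nbrs => lti ltj /eqP; rewrite nth_uniq ?uniq_nbrs // => /eqP.
Qed.

Lemma nbrP x z : E x z -> exists2 i, (i < degree G x)%N & z = nbr x i.
Proof.
rewrite -mem_nbrs => nbr_z; exists (index z (nbrs x)); last by rewrite /nbr nth_index.
by rewrite -size_nbrs index_mem.
Qed.

Lemma sum_nbrs x (F : T -> int) :
  (forall z, ~~ E x z -> F z = 0) -> \sum_z F z = \sum_(i < degree G x) F (nbr x i).
Proof.
move=> F0; transitivity (\sum_(z <- nbrs x) F z).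
  rewrite [RHS]big_uniq ?uniq_nbrs //= [RHS]big_mkcond /=; apply: eq_bigr => z _.
  by case: ifPn => //; rewrite mem_nbrs => /F0.
by rewrite (big_nth x) size_nbrs big_mkord.
Qed.

End Neighbours.

Section FiveRegular.
Variables (T : finType) (G : signed_graph T).
Local Notation E := (sg_edge G).
Local Notation A := (adjA G).
Hypotheses (reg5 : regular G 5) (net1 : net_regular G 1).

Lemma pdeg3 x : pdeg G x = 3%N.
Proof. by have := net1 x; have := pdeg_add_ndeg G x; rewrite reg5 /netdeg; lia. Qed.

Lemma ndeg2 x : ndeg G x = 2%N.
Proof. by have := pdeg_add_ndeg G x; rewrite reg5 pdeg3; lia. Qed.

Lemma adjA_nbr5 x i : (i < 5)%N -> A x (nbr G x i) = nb_sign i.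
Proof. by rewrite -(reg5 x) => lti; rewrite adjA_nbr // pdeg3. Qed.

Lemma posE_nbr x i : (i < 3)%N -> posE G x (nbr G x i).
Proof. by move=> lti; rewrite -adjA_eq1 adjA_nbr5 ?(ltn_trans lti) // /nb_sign lti. Qed.

Lemma negE_nbr x i : (3 <= i < 5)%N -> negE G x (nbr G x i).
Proof. by case/andP=> gei lti; rewrite -adjA_eqN1 adjA_nbr5 // /nb_sign ltnNge gei. Qed.

Lemma nbr_pos x y : posE G x y -> exists2 i, (i < 3)%N & y = nbr G x i.
Proof.
move=> pxy; have [i + ey] := nbrP (andP pxy).1; rewrite reg5 => lti.
by exists i => //; move: pxy; rewrite ey -adjA_eq1 adjA_nbr5 // /nb_sign; case: ifP.
Qed.

Lemma nbr_neg x y : negE G x y -> exists2 i, (3 <= i < 5)%N & y = nbr G x i.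
Proof.
move=> nxy; have [i + ey] := nbrP (andP nxy).1; rewrite reg5 => lti.
exists i => //; move: nxy; rewrite ey -adjA_eqN1 adjA_nbr5 // /nb_sign lti andbT.
by case: ltnP.
Qed.

Lemma sum_nbrs5 x (F : T -> int) :
  (forall z, ~~ E x z -> F z = 0) -> \sum_z F z = sum5 (fun i => F (nbr G x i)).
Proof. by move/sum_nbrs->; rewrite sum5E reg5. Qed.

Definition config_at (x : T) : config :=
  let f := nbr G x in
  config_of (A (f 0%N) (f 1%N)) (A (f 0%N) (f 2%N)) (A (f 0%N) (f 3%N)) (A (f 0%N) (f 4%N))
            (A (f 1%N) (f 2%N)) (A (f 1%N) (f 3%N)) (A (f 1%N) (f 4%N))
            (A (f 2%N) (f 3%N)) (A (f 2%N) (f 4%N)) (A (f 3%N) (f 4%N)).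

Lemma config_atE x i j :
  (i < 5)%N -> (j < 5)%N -> config_at x i j = A (nbr G x i) (nbr G x j).
Proof.
by case: i => [|[|[|[|[|i]]]]] // _; case: j => [|[|[|[|[|j]]]]] //= _;
  rewrite ?adjA_xx // adjA_sym.
Qed.

Lemma sq_entry_config_at x i :
  (i < 5)%N -> sq_entry (config_at x) i = adjA2 G x (nbr G x i).
Proof.
move=> lti; rewrite /adjA2 (sum_nbrs5 (x := x)) => [|z]; last first.
  by rewrite -adjA_eq0 => /eqP->; rewrite mul0r.
by rewrite /sq_entry !sum5E; apply: eq_bigr => -[j ltj] _; rewrite adjA_nbr5 ?config_atE.
Qed.

(* The neighbours j of x with [P j], together with x itself when [beta], are
   distinct elements of Q. *)
Lemma count_nbrs_le x (P : pred nat) (Q : {set T}) (k : nat) (beta : bool) :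
  #|Q| = k -> (beta -> x \in Q) -> (forall j, (j < 5)%N -> P j -> nbr G x j \in Q) ->
  (beta + count P idx <= k)%N.
Proof.
move=> <- Qx QP; set L := [seq nbr G x j | j <- filter P idx].
have idx5 j : j \in filter P idx -> (j < 5)%N by rewrite mem_filter mem_iota => /andP[].
have uniqL : uniq L.
  rewrite map_inj_in_uniq ?filter_uniq ?iota_uniq // => i j /idx5 lti /idx5 ltj.
  by apply: nbr_inj; rewrite reg5.
have xL : x \notin L.
  apply/mapP => -[j /idx5 ltj xj]; move: (sg_irr G x).
  by rewrite {2}xj edge_nbr ?reg5.
have LQ y : y \in L -> y \in Q.
  by case/mapP => j jP ->; apply: QP (idx5 _ jP) _; move: jP; rewrite mem_filter => /andP[].
have subQ : {subset (if beta then x :: L else L) <= enum Q}.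
  move=> y; rewrite mem_enum; case: (beta) Qx => [Qx|_]; last exact: LQ.
  by rewrite inE => /predU1P[->|/LQ //]; apply: Qx.
have := uniq_leq_size _ subQ; rewrite -cardE.
by case: beta {Qx subQ} => /=; rewrite size_map size_filter => le_Q; apply: le_Q; rewrite /= ?xL.
Qed.

End FiveRegular.

Section LocalAnalysis.
Variables (T : finType) (G : signed_graph T) (n r : nat) (a b c : int).
Local Notation E := (sg_edge G).
Local Notation A := (adjA G).
Hypotheses (srsg : SRSG G n r a b c) (reg5 : regular G 5) (net1 : net_regular G 1)
  (abc : a + b != 2 * c).

Lemma config_at_admissible x : admissible (config_at G x).
Proof.
have [_ _ _ [diag pos neg nonadj]] := srsg.
have sq_pos i : (i < 3)%N -> sq_entry (config_at G x) i = a.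
  by move=> lti; rewrite sq_entry_config_at ?(ltn_trans lti) // pos ?posE_nbr.
have sq_neg i : (3 <= i < 5)%N -> sq_entry (config_at G x) i = b.
  by move=> i34; rewrite sq_entry_config_at ?(andP i34).2 // neg ?negE_nbr.
rewrite /admissible (sq_pos 0%N) // (sq_pos 1%N) // (sq_pos 2%N) // (sq_neg 3%N) //.
rewrite (sq_neg 4%N) // !eqxx !andbT; apply/allP => i.
rewrite mem_iota => /andP[_ lti]; apply/and3P; split.
- apply: (count_nbrs_le reg5 (x := x) (pdeg3 reg5 net1 (nbr G x i))) => [lt3|j ltj].
    by rewrite inE posE_sym posE_nbr.
  by rewrite inE config_atE // adjA_eq1.
- apply: (count_nbrs_le reg5 (x := x) (ndeg2 reg5 net1 (nbr G x i))) => [ge3|j ltj].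
    by rewrite inE negE_sym negE_nbr ?ge3.
  by rewrite inE config_atE // adjA_eqN1.
- have A0 z : ~~ E x z -> A x z = 0 by rewrite -adjA_eq0 => /eqP.
  have := adjA_normA_comm diag pos neg nonadj net1 abc x (nbr G x i).
  rewrite (sum_nbrs5 reg5 (x := x)) => [|z /A0->]; last by rewrite mul0r.
  rewrite (sum_nbrs5 reg5 (x := x)) => [|z /A0->]; last by rewrite normr0 mul0r.
  rewrite !sum5E => comm; apply/eqP.
  transitivity (\sum_(j < 5) A x (nbr G x j) * `|A (nbr G x j) (nbr G x i)|).
    by apply: eq_bigr => -[j ltj] _; rewrite adjA_nbr5 ?config_atE.
  rewrite comm; apply: eq_bigr => -[j ltj] _.
  by rewrite adjA_nbr5 // config_atE // /nb_sign; case: ifP; rewrite ?normrN normr1 mul1r.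
Qed.

Lemma config_at_facts x : local_facts (config_at G x) a b.
Proof.
have [_ _ _ [_ pos neg _]] := srsg.
have := local_facts_of_admissible (adjA_in_vals G _ _) (adjA_in_vals G _ _)
  (adjA_in_vals G _ _) (adjA_in_vals G _ _) (adjA_in_vals G _ _) (adjA_in_vals G _ _)
  (adjA_in_vals G _ _) (adjA_in_vals G _ _) (adjA_in_vals G _ _) (adjA_in_vals G _ _)
  (config_at_admissible x).
by rewrite !sq_entry_config_at // pos ?posE_nbr // neg ?negE_nbr.
Qed.

Lemma no_common_nb_pos : a = 0 -> forall x y, posE G x y -> no_common_nb G x y.
Proof.
move=> a0 x y pxy z; apply/negP => /andP[Exz Eyz].
have [i lti ey] := nbr_pos reg5 net1 pxy.
have [j + ez] := nbrP Exz; rewrite reg5 => ltj.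
have [_ facts_a0 _ _ _] := local_factsP (config_at_facts x).
suff : A y z == 0 by rewrite adjA_eq0 Eyz.
by rewrite ey ez -config_atE ?(ltn_trans lti) // facts_a0.
Qed.

Lemma no_common_nb_neg : b = 0 -> forall x y, negE G x y -> no_common_nb G x y.
Proof.
move=> b0 x y nxy z; apply/negP => /andP[Exz Eyz].
have [i i34 ey] := nbr_neg reg5 net1 nxy.
have [j + ez] := nbrP Exz; rewrite reg5 => ltj.
have [_ _ facts_b0 _ _] := local_factsP (config_at_facts x).
suff : A y z == 0 by rewrite adjA_eq0 Eyz.
by rewrite ey ez -config_atE ?(andP i34).2 // facts_b0.
Qed.

Lemma adjA_neg_nbrs y u v :
  negE G y u -> negE G y v -> u != v -> A u v = config_at G y 3%N 4%N.
Proof.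
move=> /(nbr_neg reg5 net1) [i /andP[gei lti] ->] /(nbr_neg reg5 net1) [j /andP[gej ltj] ->].
move=> neq_uv; have neq_ij : i != j by apply: contraNneq neq_uv => ->.
rewrite -config_atE //.
by have [[-> ->]|[-> ->]] : (i = 3 /\ j = 4 \/ i = 4 /\ j = 3)%N by lia.
Qed.

Lemma balanced_neg_neg_b_le0 x y z :
  balanced_triangle G x y z -> negE G x y -> negE G y z -> b <= 0.
Proof.
case/and4P=> _ _ Ezx /eqP sign nxy nyz.
have Axy : A x y = -1 by apply/eqP; rewrite adjA_eqN1.
have Ayz : A y z = -1 by apply/eqP; rewrite adjA_eqN1.
have nyx : negE G y x by rewrite negE_sym.
have neq_xz : x != z by apply: contraTneq Ezx => ->; rewrite sg_irr.
have [_ _ _ facts_e34 _] := local_factsP (config_at_facts y).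
apply: facts_e34; rewrite -(adjA_neg_nbrs nyx nyz neq_xz) adjA_sym.
by move: sign; rewrite Axy Ayz mulrNN mulr1 mul1r.
Qed.

(* At x, a = -4 makes the negative neighbours of y := nbr x 0 adjacent, which
   forces b = 4; then every neighbourhood is a clique. *)
Lemma a_neq_m4 (x : T) : connected G -> ~ complete G -> a <> -4.
Proof.
move=> conn ncomp am4; apply/ncomp/(complete_of_nbhd_cliques reg5) => // w u v Ewu Ewv neq_uv.
have [_ _ _ _ /(_ am4) [e01 e02 e12 _ _]] := local_factsP (config_at_facts x).
set y := nbr G x 0%N; set u' := nbr G x 1%N; set v' := nbr G x 2%N.
have nyu : negE G y u' by rewrite -adjA_eqN1 -config_atE // e01.
have nyv : negE G y v' by rewrite -adjA_eqN1 -config_atE // e02.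
have neq_u'v' : u' != v' by apply/eqP => /nbr_inj; rewrite reg5 => /(_ isT isT).
have [_ _ _ _ /(_ am4) [_ _ _ b4 _]] := local_factsP (config_at_facts y).
have [_ _ _ _ /(_ am4) [_ _ _ _ clique]] := local_factsP (config_at_facts w).
have [i lti eu] := nbrP Ewu; have [j ltj ev] := nbrP Ewv; rewrite reg5 in lti ltj.
suff : A u v != 0 by rewrite adjA_eq0 negbK.
rewrite eu ev -config_atE // clique //; last first.
  by apply: contraNneq neq_uv => eij; rewrite eu ev eij.
by rewrite b4 // -(adjA_neg_nbrs nyu nyv neq_u'v') -config_atE.
Qed.

Lemma parameters_ab : connected G -> ~ complete G ->
  (a = 0 /\ (b = 0 \/ b = 1)) \/ (a = 2 /\ (b = -2 \/ b = 0 \/ b = 1)).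
Proof.
move=> conn ncomp; have [_ _ nonempty _] := srsg.
have /card_gt0P [x _] : (0 < #|T|)%N.
  by rewrite lt0n; apply/eqP => /card0_eq T0; apply: nonempty => x; have := T0 x.
have [ab _ _ _ _] := local_factsP (config_at_facts x).
by have := a_neq_m4 x conn ncomp; lia.
Qed.

End LocalAnalysis.

Lemma srsg_of_class_C145 (T : finType) (G : signed_graph T) (n r : nat) (a b c : int) :
  ~ complete G ->
  class_C1 G n r a b c \/ class_C4 G n r a b c \/ class_C5 G n r a b c ->
  SRSG G n r a b c /\ a + b != 2 * c.
Proof.
move=> ncomp [[srsg _ ab [/ncomp[]|[_ c0]]]|[[srsg _ ab _ c0]|[srsg _ ab _ [c0 abc]]]];
  by split=> //; apply/eqP; lia.
Qed.

Unset Implicit Arguments.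

Theorem proposition3p4 (T : finType) (G : signed_graph T) (n : nat) (a b c : int) :
  (class_C1 G n 5 a b c \/ class_C4 G n 5 a b c \/ class_C5 G n 5 a b c) ->
  connected G -> ~ complete G -> regular G 5 -> net_regular G 1 ->
  a < 3 /\
      (a = 0 -> forall x y, posE G x y -> no_common_nb G x y) /\
      (b = 0 -> forall x y, negE G x y -> no_common_nb G x y) /\
      (a = -1 -> b <= 0) /\
      (a = -2 -> b >= -1) /\
      a > -3 /\
      -2 <= b < 3 /\
      ((exists x y z, balanced_triangle G x y z && negE G x y && negE G y z) -> b <= 0) /\
      (b = 2 \/ b = -1 -> a <= 0) /\
      (b = -2 -> a >= 1).
Proof.
move=> cls conn ncomp reg5 net1.
have [srsg abc] := srsg_of_class_C145 ncomp cls.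
have ab := parameters_ab srsg reg5 net1 abc conn ncomp.
have nc_pos := no_common_nb_pos srsg reg5 net1 abc.
have nc_neg := no_common_nb_neg srsg reg5 net1 abc.
have balanced : (exists x y z, balanced_triangle G x y z && negE G x y && negE G y z) -> b <= 0.
  move=> [x [y [z /andP[/andP[bal nxy] nyz]]]].
  exact: balanced_neg_neg_b_le0 srsg reg5 net1 abc _ _ _ bal nxy nyz.
by repeat split; try assumption; lia.
Qed.
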